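(* Let $n\ge 2$ and $q\ge 2$ be integers, $E_q=\{0,1,\dots,q-1\}$, and let $A\subseteq E_q^n$ be a subset such that $q$ divides $|A|$ and $A$ has uniform column distribution, i.e. for every coordinate $i$ at which the elements of $A$ do not all agree, each value $b\in E_q$ occurs as the $i$-th coordinate of exactly $|A|/q$ elements of $A$. Then $A$ is metrically dense: $R(A)\le R(B)$ for every subset $B\subseteq E_q^n$ that is isometric to $A$.
   Context: $E_q^n$ is the set of all $n$-tuples over $E_q$ with Hamming distance $d_H(x,y)=|\{i: x_i\neq y_i\}|$. For $A\subseteq E_q^n$, $R(A)$ is the number of coordinates $i$ such that the $i$-th coordinates of the elements of $A$ are not all equal (the number of non-constant columns of the matrix whose rows are the elements of $A$). Two subsets $A,B\subseteq E_q^n$ are isometric if there is a bijection $\phi:A\to B$ with $d_H(\phi(x),\phi(y))=d_H(x,y)$ for all $x,y\in A$. *)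

From mathcomp Require Import all_boot.
Set Implicit Arguments. Unset Strict Implicit. Unset Printing Implicit Defensive.

Definition word (n q : nat) := {ffun 'I_n -> 'I_q}.

Definition dH (n q : nat) (x y : word n q) : nat := #|[set i | x i != y i]|.

Definition nonconst_col (n q : nat) (A : {set word n q}) (i : 'I_n) : bool :=
  [exists x in A, exists y in A, x i != y i].

Definition Rk (n q : nat) (A : {set word n q}) : nat :=
  #|[set i | nonconst_col A i]|.

Definition isometric (n q : nat) (A B : {set word n q}) : Prop :=
  exists phi : word n q -> word n q,
    [/\ {in A &, injective phi}, phi @: A = B &
        {in A &, forall x y, dH (phi x) (phi y) = dH x y}].

Definition uniform_cols (n q : nat) (A : {set word n q}) : Prop :=
  forall i : 'I_n, nonconst_col A i ->
    forall b : 'I_q, #|[set x in A | x i == b]| = #|A| %/ q.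

Definition metrically_dense (n q : nat) (A : {set word n q}) : Prop :=
  forall B : {set word n q}, isometric A B -> Rk A <= Rk B.

From mathcomp Require Import all_boot.
From mathcomp Require Import zify.
Set Implicit Arguments. Unset Strict Implicit.

(* Double count the total distance D(S) = sum_{x,y in S} d_H(x,y) column by
   column. A column in which the symbol b occurs c_b times contributes
   |S|^2 - sum_b c_b^2 ordered pairs of disagreeing words; by Cauchy-Schwarz
   sum_b c_b^2 >= |S|^2/q, so q D(S) <= R(S) (q-1) |S|^2, with equality when
   every non-constant column is uniformly distributed. An isometry preserves
   D and |S|, so an A with uniform columns satisfies
   R(A) (q-1) |A|^2 = q D(A) = q D(B) <= R(B) (q-1) |A|^2. *)

Lemma sum_sqr_le (I : finType) (c : I -> nat) :
  (\sum_i c i) ^ 2 <= #|I| * \sum_i c i ^ 2.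
Proof.
have sqr_sum : (\sum_i c i) ^ 2 = \sum_i \sum_j c i * c j.
  by rewrite -mulnn big_distrl; apply: eq_bigr => i _; rewrite big_distrr.
have sum_sqr2 : \sum_(i : I) \sum_(j : I) (c i ^ 2 + c j ^ 2)
                = 2 * (#|I| * \sum_i c i ^ 2).
  under eq_bigr => i _ do rewrite big_split /= sum_nat_const.
  by rewrite big_split /= -big_distrr sum_nat_const mul2n addnn.
rewrite -(leq_pmul2l (_ : 0 < 2)) // sqr_sum -sum_sqr2 big_distrr.
apply: leq_sum => i _; rewrite big_distrr; apply: leq_sum => j _.
exact: nat_Cauchy.
Qed.

Section ColumnCounting.

Variables n q : nat.
Implicit Types S : {set word n q}.

Definition pair_dist S := \sum_(x in S) \sum_(y in S) dH x y.

Definition col_disagreements S i := \sum_(x in S) \sum_(y in S) (x i != y i).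

Definition col_count S i b := #|[set x in S | x i == b]|.

Lemma col_countE S i b : col_count S i b = \sum_(x in S) (x i == b).
Proof.
rewrite /col_count -sum1_card big_mkcond [RHS]big_mkcond /=.
by apply: eq_bigr => x _; rewrite inE; case: (x \in S); case: (x i == b).
Qed.

Lemma card_col_count S i : #|S| = \sum_b col_count S i b.
Proof.
under [RHS]eq_bigr => b _ do rewrite col_countE.
rewrite exchange_big -sum1_card; apply: eq_bigr => x _.
by rewrite (bigD1 (x i)) //= eqxx big1 // => b /negbTE nb; rewrite eq_sym nb.
Qed.

Lemma col_agreementsE S i :
  \sum_(x in S) \sum_(y in S) (x i == y i) = \sum_b col_count S i b ^ 2.
Proof.
have agree_sum (x y : word n q) :
    (x i == y i : nat) = \sum_b ((x i == b) * (y i == b)).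
  rewrite (bigD1 (x i)) //= eqxx mul1n big1 ?addn0; first by rewrite eq_sym.
  by move=> b /negbTE nb; rewrite eq_sym nb.
have -> : \sum_b col_count S i b ^ 2
          = \sum_b \sum_(x in S) \sum_(y in S) ((x i == b) * (y i == b)).
  apply: eq_bigr => b _; rewrite col_countE -mulnn big_distrl /=.
  by apply: eq_bigr => x _; rewrite big_distrr.
rewrite [RHS]exchange_big; apply: eq_bigr => x _.
by rewrite [RHS]exchange_big; apply: eq_bigr => y _; apply: agree_sum.
Qed.

Lemma col_disagreements_agreements S i :
  col_disagreements S i + \sum_b col_count S i b ^ 2 = #|S| ^ 2.
Proof.
rewrite -col_agreementsE -big_split /= expnS expn1 -sum_nat_const.
apply: eq_bigr => x _; rewrite -big_split /= -sum1_card.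
by apply: eq_bigr => y _; case: eqP.
Qed.

Lemma col_disagreements_le S i :
  q * col_disagreements S i <= (q - 1) * #|S| ^ 2.
Proof.
have := congr1 (muln q) (col_disagreements_agreements S i); rewrite mulnDr.
have := sum_sqr_le (col_count S i); rewrite card_ord -card_col_count.
rewrite mulnBl mul1n; lia.
Qed.

Lemma col_disagreements_uniform S i :
  q %| #|S| -> (forall b, col_count S i b = #|S| %/ q) ->
  q * col_disagreements S i = (q - 1) * #|S| ^ 2.
Proof.
move=> /dvdnP [k cardS] uniform.
have [q0|q_gt0] := posnP q; first by rewrite cardS; nia.
have := col_disagreements_agreements S i.
rewrite (eq_bigr (fun=> k ^ 2)) => [|b _]; last by rewrite uniform cardS mulnK.
rewrite sum_nat_const card_ord cardS; nia.
Qed.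

Lemma col_disagreements_const S i :
  ~~ nonconst_col S i -> col_disagreements S i = 0.
Proof.
move=> const; apply: big1 => x xS; apply: big1 => y yS.
apply/eqP; rewrite eqb0 negbK; apply: contraR const => neq.
by apply/existsP; exists x; rewrite xS; apply/existsP; exists y; rewrite yS.
Qed.

Lemma pair_dist_nonconst S :
  pair_dist S = \sum_(i in [set i | nonconst_col S i]) col_disagreements S i.
Proof.
have -> : pair_dist S = \sum_i col_disagreements S i.
  rewrite /pair_dist /dH.
  under eq_bigr => x _ do under eq_bigr => y _ do
    rewrite -sum1_card big_mkcond /=.
  under eq_bigr => x _ do rewrite exchange_big /=.
  rewrite exchange_big /=; apply: eq_bigr => i _.
  by apply: eq_bigr => x _; apply: eq_bigr => y _; rewrite inE; case: ifP.
rewrite [RHS]big_mkcond /=; apply: eq_bigr => i _; rewrite inE.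
by case: ifP => // /negbT /col_disagreements_const.
Qed.

Lemma pair_dist_le S : q * pair_dist S <= Rk S * ((q - 1) * #|S| ^ 2).
Proof.
rewrite pair_dist_nonconst big_distrr /Rk -sum_nat_const /=.
by apply: leq_sum => i _; apply: col_disagreements_le.
Qed.

Lemma pair_dist_uniform S :
  q %| #|S| -> uniform_cols S -> q * pair_dist S = Rk S * ((q - 1) * #|S| ^ 2).
Proof.
move=> q_dvd uniform; rewrite pair_dist_nonconst big_distrr /Rk -sum_nat_const.
apply: eq_bigr => i; rewrite inE => nonconst.
exact: col_disagreements_uniform (uniform i nonconst).
Qed.

Lemma isometric_card_pair_dist A B :
  isometric A B -> #|B| = #|A| /\ pair_dist B = pair_dist A.
Proof.
move=> [phi [phi_inj <- phi_iso]]; split; first exact: card_in_imset.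
rewrite /pair_dist (big_imset _ phi_inj); apply: eq_bigr => x xA.
by rewrite (big_imset _ phi_inj); apply: eq_bigr => y yA; apply: phi_iso.
Qed.

Lemma Rk_set0 : Rk (set0 : {set word n q}) = 0.
Proof.
apply/eqP; rewrite cards_eq0; apply/eqP/setP => i.
by rewrite !inE; apply/existsP => -[x]; rewrite inE.
Qed.

End ColumnCounting.

Theorem mainTheorem2 (n q : nat) (A : {set word n q}) :
  2 <= n -> 2 <= q -> q %| #|A| -> uniform_cols A -> metrically_dense A.
Proof.
move=> _ q_ge2 q_dvd uniform B /isometric_card_pair_dist [cardB distB].
have [/eqP|A_gt0] := posnP #|A|.
  by rewrite cards_eq0 => /eqP ->; rewrite Rk_set0.
have M_gt0 : 0 < (q - 1) * #|A| ^ 2.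
  by rewrite muln_gt0 expn_gt0 A_gt0 subn_gt0 q_ge2.
rewrite -(leq_pmul2r M_gt0) -pair_dist_uniform // -distB -cardB.
exact: pair_dist_le.
Qed.
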